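(* An even nonnegative integer $n$ satisfies $v(n)=1$ if and only if $n\in\{10,12\}$.
   Context: A hyperbinary expansion of a nonnegative integer $n$ is a word $x_0\cdots x_k$ over $\{0,1,2\}$ with $x_0\ne0$ and $\sum_i x_i2^{k-i}=n$. The empty word is the unique hyperbinary expansion of $0$. Write $\mathcal H(n)$ for the set of such expansions and $b(n)=|\mathcal H(n)|$. $A(n)$ is the directed graph on $\mathcal H(n)$ with an arc from $\mathbf x02\mathbf y$ to $\mathbf x10\mathbf y$, from $2\mathbf y$ to $10\mathbf y$, and from $\mathbf x12\mathbf y$ to $\mathbf x20\mathbf y$, for arbitrary words $\mathbf x,\mathbf y$ whenever both endpoints lie in $\mathcal H(n)$. $A(n)$ is connected. $v(n)$ denotes the cyclomatic number of $A(n)$: (number of arcs) $-\,b(n)+1$. *)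

From mathcomp Require Import all_boot all_algebra.
Set Implicit Arguments. Unset Strict Implicit. Unset Printing Implicit Defensive.

(* Words over {0,1,2} are represented as sequences of naturals. *)

(* value of x_0 ... x_k : sum_i x_i 2^(k-i) (Horner evaluation) *)
Definition hbval (w : seq nat) : nat := foldl (fun acc d => acc.*2 + d) 0 w.

(* w is a hyperbinary expansion of n: digits in {0,1,2}, x_0 <> 0
   (vacuous for the empty word), and value n. *)
Definition is_hyperbinary (n : nat) (w : seq nat) : bool :=
  [&& all (fun d => d <= 2) w, head 1 w != 0 & hbval w == n].

Fixpoint words (k : nat) : seq (seq nat) :=
  if k is k'.+1 then [seq d :: w | d <- [:: 0; 1; 2], w <- words k'] else [:: [::]].

(* every hyperbinary expansion of n has length <= trunc_log 2 n + 1,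
   since a word x_0..x_k with x_0 <> 0 has value >= 2^k *)
Definition Hset (n : nat) : seq (seq nat) :=
  filter (is_hyperbinary n) (flatten [seq words k | k <- iota 0 (trunc_log 2 n).+2]).

Definition b (n : nat) : nat := size (Hset n).

(* arcs: x02y -> x10y,  2y -> 10y,  x12y -> x20y *)
Definition arc (u w : seq nat) : bool :=
  [|| has (fun i => (u == take i u ++ [:: 0; 2] ++ drop i.+2 u) &&
                    (w == take i u ++ [:: 1; 0] ++ drop i.+2 u)) (iota 0 (size u)),
      (if u is 2 :: y then w == [:: 1, 0 & y] else false)
    | has (fun i => (u == take i u ++ [:: 1; 2] ++ drop i.+2 u) &&
                    (w == take i u ++ [:: 2; 0] ++ drop i.+2 u)) (iota 0 (size u)) ].

Definition narcs (n : nat) : nat :=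
  count (fun p => arc p.1 p.2) [seq (u, w) | u <- Hset n, w <- Hset n].

Definition v (n : nat) : int := ((narcs n)%:Z - (b n)%:Z + 1)%R.

(* Sorting expansions by their last digit gives H(2m+1) = H(m)1 and
   H(2m+2) = H(m+1)0 + H(m)2.  An arc between two such words either keeps the
   last digit, and is then an arc of the shortened words, or is a carry
   x2 -> (x+1)0, one for each expansion x of m ending in 0 or 1; there are
   b(m/2) of those.  Hence v(2m+1) = v(m) and
   v(2m+2) = v(m+1) + v(m) + b(m/2) - 1, with v >= 0 and b >= 1.
   For m > 5 and c = m/2 this reads v(2m+2) = v(c) + v(2k+2) + b(c) - 1 with
   k in {c-1, c}; if it equals 1, then b(c) = 1 and v(2k+2) = 1, so by
   induction 2k+2 is 10 or 12, i.e. c is 4, 5 or 6 -- but b(c) > 1 there.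
   The cases m <= 5 are computed. *)

From Pilot Require
Import Defs.
From mathcomp Require Import all_boot all_algebra zify.
(* MathComp's [path] also defines [arc]; the arcs of A(n) must take precedence. *)
Import Defs.
Set Implicit Arguments. Unset Strict Implicit. Unset Printing Implicit Defensive.

Lemma mem_map_cons (T : eqType) (a d : T) w s :
  (d :: w \in map (cons a) s) = (d == a) && (w \in s).
Proof. by apply/mapP/andP => [[y ys [-> ->]] | [/eqP -> ws]]; last exists w. Qed.

Lemma nil_in_map_cons (T : eqType) (a : T) s : ([::] \in map (cons a) s) = false.
Proof. by apply/mapP => -[]. Qed.

Lemma mem_rcons_map (T : eqType) (a d : T) x s :
  (rcons x d \in map (rcons^~ a) s) = (d == a) && (x \in s).
Proof.
by apply/mapP/andP => [[y ys /rcons_inj [-> ->]] | [/eqP -> xs]]; last exists x.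
Qed.

Lemma nil_in_rcons_map (T : eqType) (a : T) s : ([::] \in map (rcons^~ a) s) = false.
Proof. by apply/mapP => -[[|? ?] ? ?]. Qed.

Lemma mem_words k w : (w \in words k) = (size w == k) && all (fun d => d <= 2) w.
Proof.
elim: k w => [|k IH] [|d w] //=; rewrite !mem_cat ?mem_map_cons.
  by rewrite !nil_in_map_cons.
rewrite IH in_nil eqSS.
by case: d => [|[|[|d]]] //=; rewrite ?orbF ?andbF.
Qed.

Lemma uniq_words k : uniq (words k).
Proof.
elim: k => //= k IH.
rewrite !cat_uniq !map_inj_uniq //=; try by move=> ? ? [].
rewrite IH /= ?orbF ?andbT.
by apply/andP; split; apply/hasPn => -[|x xs];
  rewrite ?nil_in_map_cons // ?mem_cat ?mem_map_cons ?in_nil ?orbF;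
  case: x => [|[|[|x]]]; rewrite /= ?andbF ?orbF.
Qed.

Lemma foldl_double_add a w :
  foldl (fun acc d => acc.*2 + d) a w = a * 2 ^ size w + hbval w.
Proof.
elim: w a => [|d w IH] a /=; first by rewrite muln1 addn0.
rewrite IH /hbval /= IH IH expnS -!muln2; nia.
Qed.

Lemma hbval_cons d w : hbval (d :: w) = d * 2 ^ size w + hbval w.
Proof. by rewrite /hbval /= foldl_double_add. Qed.

Lemma hbval_rcons x d : hbval (rcons x d) = (hbval x).*2 + d.
Proof. by rewrite /hbval foldl_rcons. Qed.

Lemma size_hyperbinary n w : is_hyperbinary n w -> size w < (trunc_log 2 n).+2.
Proof.
case: w => [|d w] //= /and3P[_ d0 /eqP <-].
rewrite ltnS; apply: trunc_log_max => //.
rewrite hbval_cons; apply: leq_trans (leq_addr _ _).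
by rewrite leq_pmull // lt0n.
Qed.

Lemma mem_Hset n w : (w \in Hset n) = is_hyperbinary n w.
Proof.
rewrite /Hset mem_filter; case hw: (is_hyperbinary n w) => //; rewrite andTb.
apply/flattenP; exists (words (size w)).
  by apply/mapP; exists (size w); rewrite // mem_iota add0n size_hyperbinary.
by rewrite mem_words eqxx; case/and3P: hw.
Qed.

Lemma uniq_flatten_words a l : uniq (flatten [seq words k | k <- iota a l]).
Proof.
elim: l a => //= l IH a; rewrite cat_uniq uniq_words IH andbT.
apply/hasPn => w /flattenP[s /mapP[k]]; rewrite mem_iota => /andP[ak _] -> wk.
by move: wk; rewrite !mem_words => /andP[/eqP -> _]; rewrite gtn_eqF.
Qed.

Lemma uniq_Hset n : uniq (Hset n).
Proof. exact/filter_uniq/uniq_flatten_words. Qed.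

Lemma Hset0 : Hset 0 = [:: [::]].
Proof. by vm_compute. Qed.

Lemma nil_in_Hset_succ n : ([::] \in Hset n.+1) = false.
Proof. by rewrite mem_Hset /is_hyperbinary /=; case: n. Qed.

Lemma hyperbinaryE n x : is_hyperbinary n x = is_hyperbinary (hbval x) x && (hbval x == n).
Proof. by rewrite /is_hyperbinary eqxx andbT andbA. Qed.

Lemma hyperbinary_rcons n x d : is_hyperbinary n (rcons x d) =
  [&& d <= 2, (x != [::]) || (d != 0), is_hyperbinary (hbval x) x & n == (hbval x).*2 + d].
Proof.
rewrite /is_hyperbinary hbval_rcons all_rcons eqxx andbT [n == _]eq_sym.
case: x => [|a x] /=; first by case: (d <= 2); case: (d != 0); case: (_ == n).
by case: (d <= 2); case: (a <= 2); case: (a != 0); case: (all _ _).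
Qed.

Lemma perm_Hset_odd m : perm_eq (Hset (2 * m + 1)) (map (rcons^~ 1) (Hset m)).
Proof.
apply: uniq_perm; rewrite ?map_inj_uniq ?uniq_Hset //; first exact: rcons_injl.
case/lastP => [|x d].
  by rewrite addn1 nil_in_Hset_succ nil_in_rcons_map.
rewrite mem_Hset hyperbinary_rcons mem_rcons_map mem_Hset [is_hyperbinary m x]hyperbinaryE.
case: (is_hyperbinary _ x); rewrite ?andbF //=.
by case: d => [|[|[|d]]] /=; rewrite ?andbF // -muln2 ?orbT /=; apply/eqP/eqP; lia.
Qed.

Lemma perm_Hset_even m : perm_eq (Hset (2 * m + 2))
  (map (rcons^~ 0) (Hset m.+1) ++ map (rcons^~ 2) (Hset m)).
Proof.
apply: uniq_perm; rewrite ?uniq_Hset //.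
  rewrite cat_uniq !map_inj_uniq ?uniq_Hset //; try exact: rcons_injl.
  rewrite andbT /=; apply/hasPn; case/lastP => [|x d].
    by rewrite nil_in_rcons_map.
  by rewrite !mem_rcons_map; case/andP => /eqP ->.
case/lastP => [|x d].
  by rewrite addn2 nil_in_Hset_succ mem_cat !nil_in_rcons_map.
rewrite mem_cat mem_Hset hyperbinary_rcons !mem_rcons_map !mem_Hset
  [is_hyperbinary m x]hyperbinaryE [is_hyperbinary m.+1 x]hyperbinaryE.
case: (is_hyperbinary _ x); rewrite ?andbF //=.
case: d => [|[|[|d]]] /=; rewrite ?andbF ?orbF // -muln2 ?orbT /=.
- by case: x => [|a x] /=; [rewrite /hbval /=; apply/eqP | apply/eqP/eqP]; lia.
- by apply/eqP; lia.
- by apply/eqP/eqP; lia.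
Qed.

Variant binary_split_spec : nat -> Prop :=
  | SplitZero : binary_split_spec 0
  | SplitOdd m : binary_split_spec (2 * m + 1)
  | SplitEven m : binary_split_spec (2 * m + 2).

Lemma binary_splitP n : binary_split_spec n.
Proof.
rewrite -[n]odd_double_half -muln2 mulnC; case: (odd n) => /=.
  by rewrite add1n -addn1; constructor.
by case: n./2 => [|k]; [constructor | rewrite mulnS add0n addnC; constructor].
Qed.

Lemma b0 : b 0 = 1.
Proof. by rewrite /b Hset0. Qed.

Lemma b_odd m : b (2 * m + 1) = b m.
Proof. by rewrite /b (perm_size (perm_Hset_odd m)) size_map. Qed.

Lemma b_even m : b (2 * m + 2) = b m.+1 + b m.
Proof. by rewrite /b (perm_size (perm_Hset_even m)) size_cat !size_map. Qed.

Lemma has_rewrite2P (u w : seq nat) a1 a2 c1 c2 :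
  reflect (exists x y, u = x ++ [:: a1; a2] ++ y /\ w = x ++ [:: c1; c2] ++ y)
   (has (fun i => (u == take i u ++ [:: a1; a2] ++ drop i.+2 u) &&
                  (w == take i u ++ [:: c1; c2] ++ drop i.+2 u)) (iota 0 (size u))).
Proof.
apply: (iffP hasP) => [[i _ /andP[/eqP e1 /eqP e2]] | [x [y [e1 e2]]]].
  by exists (take i u), (drop i.+2 u).
exists (size x); first by rewrite mem_iota e1 size_cat /= add0n; lia.
have -> : take (size x) u = x by rewrite e1 take_size_cat.
have -> : drop (size x).+2 u = y.
  by rewrite e1 -add2n -drop_drop (drop_size_cat _ (erefl (size x))) /= drop0.
by rewrite -e1 -e2 !eqxx.
Qed.

Lemma arcP u w : reflect
  [\/ exists x y, u = x ++ [:: 0; 2] ++ y /\ w = x ++ [:: 1; 0] ++ y,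
      exists y, u = 2 :: y /\ w = [:: 1, 0 & y]
    | exists x y, u = x ++ [:: 1; 2] ++ y /\ w = x ++ [:: 2; 0] ++ y] (arc u w).
Proof.
apply: (iffP or3P) => -[/has_rewrite2P h | h | /has_rewrite2P h].
- exact: Or31 h.
- by apply: Or32; case: u h => [|[|[|[|]]] y] //= /eqP ->; exists y.
- exact: Or33 h.
- exact: Or31 h.
- by apply: Or32; case: h => y [-> ->].
- exact: Or33 h.
Qed.

Definition incr_last (x : seq nat) := rcons (take (size x).-1 x) (last 0 x).+1.

Lemma incr_last_rcons p e : incr_last (rcons p e) = rcons p e.+1.
Proof.
by rewrite /incr_last last_rcons size_rcons /= -[rcons p e]cats1 take_size_cat.
Qed.

Lemma cat_pair_nil (p : seq nat) a c : p ++ [:: a; c] ++ [::] = rcons (rcons p a) c.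
Proof. by rewrite -!cats1 -catA. Qed.

Lemma arc_rcons (x : seq nat) a y c : arc (rcons x a) (rcons y c) <->
  (a = c /\ arc x y) \/ [/\ a = 2, c = 0, last 0 x < 2 & y = incr_last x].
Proof.
split.
- case/arcP => [[p [q [e1 e2]]] | [q [e1 e2]] | [p [q [e1 e2]]]].
  + case/lastP: q e1 e2 => [|q e].
      rewrite !cat_pair_nil => /rcons_inj[-> ->] /rcons_inj[-> ->].
      by right; rewrite last_rcons incr_last_rcons.
    rewrite -!rcons_cat => /rcons_inj[-> ->] /rcons_inj[-> ->].
    by left; split => //; apply/arcP/Or31; exists p, q.
  + case/lastP: q e1 e2 => [|q e].
      case: x => [|? [|? ?]] //= [->]; case: y => [|? [|? [|? ?]]] //= [-> ->].
      by right.
    rewrite -!rcons_cons => /rcons_inj[-> ->] /rcons_inj[-> ->].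
    by left; split => //; apply/arcP/Or32; exists q.
  + case/lastP: q e1 e2 => [|q e].
      rewrite !cat_pair_nil => /rcons_inj[-> ->] /rcons_inj[-> ->].
      by right; rewrite last_rcons incr_last_rcons.
    rewrite -!rcons_cat => /rcons_inj[-> ->] /rcons_inj[-> ->].
    by left; split => //; apply/arcP/Or33; exists p, q.
- case=> [[<- /arcP h] | [-> -> lt2 ->]]; apply/arcP.
  + case: h => [[p [q [-> ->]]] | [q [-> ->]] | [p [q [-> ->]]]].
    * by apply: Or31; exists p, (rcons q a); rewrite !rcons_cat.
    * by apply: Or32; exists (rcons q a).
    * by apply: Or33; exists p, (rcons q a); rewrite !rcons_cat.
  + case/lastP: x lt2 => [|p e]; first by move=> _; apply: Or32; exists [::].
    rewrite last_rcons incr_last_rcons; case: e => [|[|]] // _.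
    * by apply: Or31; exists p, [::]; rewrite !cat_pair_nil.
    * by apply: Or33; exists p, [::]; rewrite !cat_pair_nil.
Qed.

Lemma arc_rcons_same x y (a : nat) : arc (rcons x a) (rcons y a) = arc x y.
Proof.
apply/idP/idP => [/arc_rcons[[_ //] | [a2 a0]] | h]; last by apply/arc_rcons; left.
by rewrite a2 in a0.
Qed.

Lemma arc_rcons02 x y : arc (rcons x 0) (rcons y 2) = false.
Proof. by apply/negP => /arc_rcons[[] | []]. Qed.

Lemma arc_rcons20 x y : arc (rcons x 2) (rcons y 0) = (last 0 x < 2) && (y == incr_last x).
Proof.
apply/idP/andP => [/arc_rcons[[] // | [_ _ -> ->]] | [lt2 /eqP ->]] //.
by apply/arc_rcons; right.
Qed.

Definition arc_count (s t : seq (seq nat)) := \sum_(u <- s) count (arc u) t.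

Lemma arc_countE s t :
  count (fun p => arc p.1 p.2) [seq (u, w) | u <- s, w <- t] = arc_count s t.
Proof.
rewrite /arc_count; elim: s => [|x s IH]; first by rewrite big_nil.
by rewrite big_cons /= count_cat IH count_map.
Qed.

Lemma arc_count_perm s1 s2 t1 t2 :
  perm_eq s1 s2 -> perm_eq t1 t2 -> arc_count s1 t1 = arc_count s2 t2.
Proof.
move=> ps /permP pt; rewrite /arc_count (perm_big _ ps).
by apply: eq_bigr => u _; apply: pt.
Qed.

Lemma arc_count_catl s1 s2 t : arc_count (s1 ++ s2) t = arc_count s1 t + arc_count s2 t.
Proof. by rewrite /arc_count big_cat. Qed.

Lemma arc_count_catr s t1 t2 : arc_count s (t1 ++ t2) = arc_count s t1 + arc_count s t2.
Proof. by rewrite /arc_count -big_split; apply: eq_bigr => u _; rewrite count_cat. Qed.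

Lemma arc_count_map a c s t : arc_count (map (rcons^~ a) s) (map (rcons^~ c) t) =
  \sum_(x <- s) count (fun y => arc (rcons x a) (rcons y c)) t.
Proof. by rewrite /arc_count big_map; apply: eq_bigr => x _; rewrite count_map. Qed.

Lemma arc_count_map_same a s t :
  arc_count (map (rcons^~ a) s) (map (rcons^~ a) t) = arc_count s t.
Proof.
rewrite arc_count_map; apply: eq_bigr => x _.
by apply: eq_count => y; rewrite arc_rcons_same.
Qed.

Lemma incr_last_hyperbinary m x :
  is_hyperbinary m x -> last 0 x < 2 -> is_hyperbinary m.+1 (incr_last x).
Proof.
case/lastP: x => [|p e]; first by case/and3P => _ _ /eqP <-.
rewrite incr_last_rcons last_rcons !hyperbinary_rcons => /and4P[_ _ -> /eqP ->] e2.
by rewrite orbT addnS e2 eqxx.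
Qed.

Lemma count_last_lt2 m : count (fun x => last 0 x < 2) (Hset m) = b m./2.
Proof.
case: m / binary_splitP => [|m|m]; first by rewrite Hset0 b0.
- have -> : (2 * m + 1)./2 = m by lia.
  rewrite (permP (perm_Hset_odd m)) count_map /b -count_predT.
  by apply: eq_count => x; rewrite /= last_rcons.
- rewrite (permP (perm_Hset_even m)) count_cat !count_map.
  rewrite [count _ (Hset m)](@eq_count _ _ pred0) ?count_pred0; last first.
    by move=> x; rewrite /= last_rcons.
  have -> : (2 * m + 2)./2 = m.+1 by lia.
  by rewrite addn0 /b -count_predT; apply: eq_count => x; rewrite /= last_rcons.
Qed.

Lemma narcs_odd m : narcs (2 * m + 1) = narcs m.
Proof.
by rewrite /narcs !arc_countE (arc_count_perm (perm_Hset_odd m) (perm_Hset_odd m))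
  arc_count_map_same.
Qed.

Lemma narcs_even m : narcs (2 * m + 2) = narcs m.+1 + narcs m + b m./2.
Proof.
rewrite /narcs !arc_countE (arc_count_perm (perm_Hset_even m) (perm_Hset_even m)).
rewrite !arc_count_catl !arc_count_catr !arc_count_map_same !arc_count_map.
have no_02 : \sum_(x <- Hset m.+1) count (fun y => arc (rcons x 0) (rcons y 2)) (Hset m) = 0.
  by rewrite big1 // => x _; rewrite (@eq_count _ _ pred0) ?count_pred0 // => y; rewrite arc_rcons02.
have carries : \sum_(x <- Hset m) count (fun y => arc (rcons x 2) (rcons y 0)) (Hset m.+1)
    = b m./2.
  rewrite -count_last_lt2 -sum1_count [RHS]big_mkcond.
  apply: eq_big_seq => x xH; under eq_count => y do rewrite arc_rcons20.
  case: ifP => lt2 /=; last by rewrite count_pred0.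
  by rewrite (count_uniq_mem _ (uniq_Hset _)) mem_Hset incr_last_hyperbinary -?mem_Hset.
by rewrite no_02 carries addn0 [b _ + _]addnC addnA.
Qed.

Lemma nat_double_ind (P : nat -> Prop) :
  P 0 -> (forall m, P m -> P (2 * m + 1)) -> (forall m, P m -> P m.+1 -> P (2 * m + 2)) ->
  forall n, P n.
Proof.
move=> P0 Podd Peven n; elim/ltn_ind: n => n IH.
case: n / binary_splitP IH => [|m|m] IH //; first by apply/Podd/IH; lia.
by apply: Peven; apply: IH; lia.
Qed.

Lemma b_gt0 n : 0 < b n.
Proof.
by elim/nat_double_ind: n => [|m|m]; rewrite ?b0 ?b_odd ?b_even // => _ bm1; rewrite addn_gt0 bm1.
Qed.

Lemma b_even_gt1 m : 1 < b (2 * m + 2).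
Proof. by rewrite b_even -addn1 leq_add ?b_gt0. Qed.

Lemma b_succ_eq1 i : b i = 1 -> b i.+1 = 1 -> i = 0.
Proof.
case: i / binary_splitP => [|m|m] //.
  have -> : (2 * m + 1).+1 = 2 * m + 2 by lia.
  by move=> _ b1; have := b_even_gt1 m; rewrite b1.
by move=> b1; have := b_even_gt1 m; rewrite b1.
Qed.

Lemma b_eq2 c : b c = 2 -> c = 2 \/ exists2 c', c = 2 * c' + 1 & b c' = 2.
Proof.
case: c / binary_splitP => [|c|c]; rewrite ?b0 ?b_odd ?b_even //.
  by move=> bc; right; exists c.
move=> b2; have [bc1 bc1'] : b c = 1 /\ b c.+1 = 1.
  by have := b_gt0 c; have := b_gt0 c.+1; lia.
by rewrite (b_succ_eq1 bc1 bc1'); left.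
Qed.

Section Cyclomatic.
Local Open Scope ring_scope.

Lemma v0 : v 0 = 0.
Proof. by rewrite /v /narcs /b Hset0. Qed.

Lemma v_odd m : v (2 * m + 1) = v m.
Proof. by rewrite /v narcs_odd b_odd. Qed.

Lemma v_even m : v (2 * m + 2) = v m.+1 + v m + (b m./2)%:Z - 1.
Proof. by rewrite /v narcs_even b_even; lia. Qed.

Lemma v_ge0 n : 0 <= v n.
Proof.
elim/nat_double_ind: n => [|m|m]; rewrite ?v0 ?v_odd ?v_even // => vm vm1.
by have := b_gt0 m./2; lia.
Qed.

Lemma b_eq1_v0 n : b n = 1%N -> v n = 0.
Proof.
elim/nat_double_ind: n => [|m|m]; rewrite ?v0 ?v_odd ?b_odd // => _ _ b1.
by have := b_even_gt1 m; rewrite b1.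
Qed.

Lemma v_even_halfE m : (0 < m)%N ->
  exists2 k, k = m./2 \/ k.+1 = m./2 &
    v (2 * m + 2) = v m./2 + v (2 * k + 2) + (b m./2)%:Z - 1.
Proof.
case: m / binary_splitP => [|m|m] // _.
- have half_m : (2 * m + 1)./2 = m by lia.
  have succ_m : (2 * m + 1).+1 = (2 * m + 2)%N by lia.
  by exists m; rewrite ?half_m; [left | rewrite v_even v_odd succ_m half_m; lia].
- have half_m : (2 * m + 2)./2 = m.+1 by lia.
  have succ_m : (2 * m + 2).+1 = (2 * m.+1 + 1)%N by lia.
  by exists m; rewrite ?half_m; [right | rewrite v_even succ_m v_odd half_m; lia].
Qed.

(* The alternative [b c = 2] makes [v (2k+2) = 0], hence [b (k/2) = 1], which
   [b_eq2] rules out once [c > 2]. *)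
Lemma v_eq1_descent c k : (2 < c)%N -> k = c \/ k.+1 = c ->
  v c + v (2 * k + 2) + (b c)%:Z = 2 -> v (2 * k + 2) = 1 /\ b c = 1%N.
Proof.
move=> c_gt2 kc sum2; have vc_ge0 := v_ge0 c; have vk_ge0 := v_ge0 (2 * k + 2).
have [bc1 | bc_ne1] := eqVneq (b c) 1%N.
  by rewrite (b_eq1_v0 bc1) in sum2; split => //; lia.
have bc2 : b c = 2%N by have := b_gt0 c; lia.
have bk1 : b k./2 = 1%N.
  have : v (2 * k + 2) = 0 by lia.
  by rewrite v_even; have := v_ge0 k.+1; have := v_ge0 k; have := b_gt0 k./2; lia.
have [c2 | [c' cE bc'2]] := b_eq2 bc2; first by lia.
have half_k : k./2 = c' by lia.
by move: bk1; rewrite half_k bc'2.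
Qed.

End Cyclomatic.

Lemma v_even_small m : m <= 5 -> (v (2 * m + 2) == 1%R) = (m \in [:: 4; 5]).
Proof. by case: m => [|[|[|[|[|[|m]]]]]] // _; vm_compute. Qed.

Lemma b_ne1_4_6 c : 3 < c < 7 -> b c != 1.
Proof. by case: c => [|[|[|[|[|[|[|c]]]]]]] // _; vm_compute. Qed.

Lemma v_even_eq1 n : ~~ odd n -> v n = 1%R -> n = 10 \/ n = 12.
Proof.
elim/ltn_ind: n => n IH; case: n / binary_splitP IH => [|m|m] IH; first by rewrite v0.
  by rewrite oddD oddM.
move=> _ vm1; have [m_le5 | m_gt5] := leqP m 5.
  by move/eqP: vm1; rewrite v_even_small // !inE => /orP[] /eqP ->; [left | right].
have [k kc vE] := v_even_halfE (leq_ltn_trans (leq0n 5) m_gt5).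
have [vk1 bc1] : v (2 * k + 2) = 1%R /\ b m./2 = 1.
  by apply: v_eq1_descent kc _; [lia | move: vE; rewrite vm1; lia].
have k45 : (2 * k + 2 = 10 \/ 2 * k + 2 = 12)%N.
  by apply: IH vk1; [lia | rewrite oddD oddM].
by have := @b_ne1_4_6 m./2; rewrite bc1; lia.
Qed.

Theorem mainTheorem3 (n : nat) :
  ~~ odd n -> (v n = 1%Z <-> n = 10 \/ n = 12).
Proof.
move=> n_even; split; first exact: v_even_eq1.
by case=> ->; vm_compute.
Qed.
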